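(* Let $\rho\in\Delta_{|\mathcal S|}$ and let $\pi,\pi'$ be policies. Define $\underline L_{\rho,\pi'}(v):=\min_{x\in X(\rho,\pi')}L_{\rho,\pi'}(x,v)$, where $$L_{\rho,\pi'}(x,v):=\langle c,x\rangle+\sum_{s\in\mathcal S}\eta^{\pi'}_\rho(s)\,\bar h^{x(\cdot,s)}(s)+\langle v,\rho-(\hat I-\gamma P)^Tx\rangle .$$ Then, with $V^\pi\in\mathbb R^{|\mathcal S|}$ the value function of $\pi$, $$\underline L_{\rho,\pi'}(V^\pi)=\langle V^\pi,\rho\rangle-\sum_{s\in\mathcal S}\eta^{\pi'}_\rho(s)\cdot\max_{p\in\Delta_{|\mathcal A|}}\{-\psi^\pi(s,p)\}.$$
   Context: An infinite-horizon discounted MDP: finite $\mathcal S$, $\mathcal A$, transition probabilities $\mathcal P(s'\mid s,a)$, cost $c$, discount $\gamma\in[0,1)$. A policy assigns $\pi(\cdot\mid s)\in\Delta_{|\mathcal A|}$ (probability simplex) to each state. For each $s$, $p\mapsto h^p(s)$ is a closed convex function on $\Delta_{|\mathcal A|}$. $V^\pi(s)=\mathbb E[\sum_{t\ge0}\gamma^t(c(s_t,a_t)+h^{\pi(\cdot\mid s_t)}(s_t))\mid s_0=s,\ a_t\sim\pi(\cdot\mid s_t),\ s_{t+1}\sim\mathcal P(\cdot\mid s_t,a_t)]$, $Q^\pi(s,a)$ the same with $a_0=a$; the advantage function is $\psi^\pi(s,p):=\langle Q^\pi(s,\cdot),p\rangle-V^\pi(s)+h^p(s)-h^{\pi(\cdot\mid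 s)}(s)$. Visitation: $\kappa^\pi_q(s):=(1-\gamma)\sum_{t\ge0}\gamma^t\Pr^\pi\{s_t=s\mid s_0=q\}$ and $\eta^\pi_\rho(s):=(1-\gamma)^{-1}\sum_q\rho(q)\kappa^\pi_q(s)$. Vectors $x\in\mathbb R^{|\mathcal A|\times|\mathcal S|}$ have entries $x(a,s)$ and $\langle c,x\rangle=\sum_{s,a}c(s,a)x(a,s)$; $(\hat I-\gamma P)^Tx$ is the vector in $\mathbb R^{|\mathcal S|}$ with entries $\sum_a x(a,s)-\gamma\sum_{s',a}\mathcal P(s\mid s',a)x(a,s')$ (so $\langle v,(\hat I-\gamma P)^Tx\rangle=\sum_{s,a}x(a,s)[v(s)-\gamma\sum_{s'}\mathcal P(s'\mid s,a)v(s')]$). $X(\rho,\pi'):=\{x\ge0:\sum_{a}x(a,s)=\eta^{\pi'}_\rho(s)\ \forall s\}$. For $x\in X(\rho,\pi')$, $\bar h^{x(\cdot,s)}(s):=h^{u(\cdot,s)}(s)$ with $u(\cdot,s)=x(\cdot,s)/\sum_a x(a,s)$. *)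

From HB Require Import structures.
From mathcomp Require Import all_boot all_order all_algebra.
From mathcomp Require Import all_classical all_reals all_analysis.
Set Implicit Arguments. Unset Strict Implicit. Unset Printing Implicit Defensive.
Import Order.TTheory GRing.Theory Num.Theory.
Local Open Scope ring_scope.

Section MDP.
Variables (R : realType) (S A : finType).

Definition in_simplex (T : finType) (p : T -> R) : Prop :=
  (forall t, 0 <= p t) /\ \sum_(t : T) p t = 1.

(* a policy: pi s is a distribution on actions; pi s a = pi(a|s) *)
Definition is_policy (pi : S -> A -> R) : Prop := forall s, in_simplex (pi s).

(* transition kernel: P s a s' = P(s' | s, a) *)
Definition is_kernel (P : S -> A -> S -> R) : Prop :=
  forall s a, in_simplex (P s a).

(* closed convex function on the simplex Delta_|A| (real valued on Delta):
   convex on Delta, and lower semicontinuous relative to Delta (closed epigraph) *)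
Definition closed_convex_on_simplex (f : (A -> R) -> R) : Prop :=
  (forall p q (t : R), in_simplex p -> in_simplex q -> 0 <= t <= 1 ->
     f (fun a => t * p a + (1 - t) * q a) <= t * f p + (1 - t) * f q) /\
  (forall p, in_simplex p -> forall e : R, 0 < e -> exists2 d : R, 0 < d &
     forall q, in_simplex q -> (forall a, `|q a - p a| < d) -> f p - e < f q).

(* Pr^pi { s_t = s' | s_0 = q } *)
Fixpoint state_prob (P : S -> A -> S -> R) (pi : S -> A -> R) (t : nat)
  (q s' : S) : R :=
  match t with
  | 0 => (q == s')%:R
  | t.+1 => \sum_(s : S) state_prob P pi t q s *
              \sum_(a : A) pi s a * P s a s'
  end.

Definition step_cost (c : S -> A -> R) (h : S -> (A -> R) -> R)
  (pi : S -> A -> R) (s : S) : R :=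
  \sum_(a : A) pi s a * c s a + h s (pi s).

Definition rseries (u : nat -> R) : R := limn (fun n => \sum_(0 <= t < n) u t).

(* V^pi(s) = E[ sum_t gamma^t (c(s_t,a_t) + h^{pi(.|s_t)}(s_t)) | s_0 = s ] *)
Definition Vfun (gamma : R) (P : S -> A -> S -> R) (c : S -> A -> R)
  (h : S -> (A -> R) -> R) (pi : S -> A -> R) (s : S) : R :=
  rseries (fun t => gamma ^+ t *
    \sum_(s' : S) state_prob P pi t s s' * step_cost c h pi s').

(* Q^pi(s,a): same with a_0 = a *)
Definition Qfun (gamma : R) (P : S -> A -> S -> R) (c : S -> A -> R)
  (h : S -> (A -> R) -> R) (pi : S -> A -> R) (s : S) (a : A) : R :=
  c s a + h s (pi s) + gamma * \sum_(s' : S) P s a s' * Vfun gamma P c h pi s'.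

Definition psi (gamma : R) (P : S -> A -> S -> R) (c : S -> A -> R)
  (h : S -> (A -> R) -> R) (pi : S -> A -> R) (s : S) (p : A -> R) : R :=
  \sum_(a : A) Qfun gamma P c h pi s a * p a - Vfun gamma P c h pi s
  + h s p - h s (pi s).

Definition kappa (gamma : R) (P : S -> A -> S -> R) (pi : S -> A -> R)
  (q s : S) : R :=
  (1 - gamma) * rseries (fun t => gamma ^+ t * state_prob P pi t q s).

Definition eta_vis (gamma : R) (P : S -> A -> S -> R) (pi : S -> A -> R)
  (rho : S -> R) (s : S) : R :=
  (1 - gamma)^-1 * \sum_(q : S) rho q * kappa gamma P pi q s.

(* X(rho, pi'); x a s = x(a,s) *)
Definition Xset (gamma : R) (P : S -> A -> S -> R) (pi' : S -> A -> R)
  (rho : S -> R) (x : A -> S -> R) : Prop :=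
  (forall a s, 0 <= x a s) /\
  (forall s, \sum_(a : A) x a s = eta_vis gamma P pi' rho s).

Definition hbar (h : S -> (A -> R) -> R) (x : A -> S -> R) (s : S) : R :=
  h s (fun a => x a s / \sum_(a' : A) x a' s).

(* ((I^ - gamma P)^T x)(s) *)
Definition flowT (gamma : R) (P : S -> A -> S -> R) (x : A -> S -> R) (s : S)
  : R :=
  \sum_(a : A) x a s - gamma * \sum_(s' : S) \sum_(a : A) P s' a s * x a s'.

Definition Lag (gamma : R) (P : S -> A -> S -> R) (c : S -> A -> R)
  (h : S -> (A -> R) -> R) (pi' : S -> A -> R) (rho : S -> R)
  (x : A -> S -> R) (v : S -> R) : R :=
  \sum_(s : S) \sum_(a : A) c s a * x a s
  + \sum_(s : S) eta_vis gamma P pi' rho s * hbar h x s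
  + \sum_(s : S) v s * (rho s - flowT gamma P x s).

End MDP.

Definition is_min_of (R : realType) (T : Type) (D : T -> Prop) (f : T -> R)
  (m : R) : Prop :=
  (exists2 x, D x & f x = m) /\ (forall x, D x -> m <= f x).

Definition is_max_of (R : realType) (T : Type) (D : T -> Prop) (f : T -> R)
  (m : R) : Prop :=
  (exists2 x, D x & f x = m) /\ (forall x, D x -> f x <= m).

From HB Require Import structures.
From mathcomp Require Import all_boot all_order all_algebra.
From mathcomp Require Import all_classical all_reals all_analysis.
From mathcomp Require Import finmap ring lra.
Import Order.TTheory GRing.Theory Num.Theory.
Local Open Scope ring_scope.
Import numFieldNormedType.Exports.

(* Pairing [v] with the flow constraint of [x] and exchanging sums rewrites
   L(x, v) as <v, rho> plus, state by state, sum_a x(a,s) (c + gamma P v - v)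
   + eta(s) h(u(.,s)).  For v = V^pi and x in X(rho, pi') this state term is
   exactly eta(s) psi^pi(s, u(.,s)), with u(.,s) in the simplex wherever
   eta(s) > 0.  Hence L is bounded below by <V^pi, rho> + sum_s eta(s) min_p
   psi^pi(s, p), with equality at x(a,s) = eta(s) p*(a|s) for a minimiser p*.
   That minimiser exists because psi^pi(s, .) is a linear function plus the
   lower semicontinuous h(s, .) on the compact simplex. *)

Set Implicit Arguments.
Unset Strict Implicit.
Unset Printing Implicit Defensive.

Section SimplexMinimum.
Local Open Scope classical_set_scope.
Variables (R : realType) (A : finType).

Definition lsc_on_simplex (f : (A -> R) -> R) : Prop :=
  forall p, in_simplex p -> forall e : R, 0 < e -> exists2 d : R, 0 < d &
    forall q, in_simplex q -> (forall a, `|q a - p a| < d) -> f p - e < f q.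

Definition fun_of_row (v : 'rV[R]_#|A|) : A -> R := fun a => v ord0 (enum_rank a).
Definition row_of_fun (p : A -> R) : 'rV[R]_#|A| := \row_i p (enum_val i).

Lemma row_of_funK : cancel row_of_fun fun_of_row.
Proof. by move=> p; apply/funext => a; rewrite /fun_of_row mxE enum_rankK. Qed.

Definition simplex_rows : set 'rV[R]_#|A| := [set v | in_simplex (fun_of_row v)].

Lemma closed_simplex_rows : closed simplex_rows.
Proof.
have -> : simplex_rows = \bigcap_(a in setT) [set v | 0 <= fun_of_row v a]
    `&` [set v | \sum_a fun_of_row v a = 1].
  by apply/seteqP; split => v [v0 v1]; split => // a; [move=> _|]; apply: v0.
have coord_cont a : continuous (fun_of_row^~ a) :=
  @coord_continuous _ 1 _ ord0 (enum_rank a).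
apply: closedI.
  apply: closed_bigI => a _.
  exact: (closed_comp (fun v _ => coord_cont a v) (@closed_ge _ 0)).
apply: (closed_comp _ (@closed_eq _ 1)) => v _.
exact: (continuous_big add_continuous).
Qed.

Lemma compact_simplex_rows : compact simplex_rows.
Proof.
apply: (subclosed_compact closed_simplex_rows
  (rV_compact (fun _ => @segment_compact R 0 1))).
move=> v [v0 v1] i /=; rewrite -(enum_valK i) in_itv /= v0 -v1.
by rewrite (bigD1 (enum_val i)) //= lerDl sumr_ge0.
Qed.

Lemma lsc_on_simplex_min (f : (A -> R) -> R) (p0 : A -> R) :
  in_simplex p0 -> lsc_on_simplex f ->
  exists2 p, in_simplex p & forall q, in_simplex q -> f p <= f q.
Proof.
(* Otherwise the sets on which f exceeds f w cover the simplex; in a finite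
   subcover, the w of least value lies in one of them. *)
move=> simplex_p0 lsc_f; apply: contrapT => no_min.
pose g v := f (fun_of_row v).
have improve v : simplex_rows v -> exists2 w, simplex_rows w & g w < g v.
  move=> Kv; apply: contrapT => no_better; apply: no_min.
  exists (fun_of_row v) => // q Kq; rewrite leNgt; apply/negP => fq.
  apply: no_better; exists (row_of_fun q);
    by rewrite /simplex_rows /g /= row_of_funK.
pose U w := \bigcup_(bd in [set bd : 'rV_#|A| * R | 0 < bd.2 /\
  forall z, simplex_rows z -> ball bd.1 bd.2 z -> g w < g z]) ball bd.1 bd.2.
have openU w : simplex_rows w -> open (U w).
  by move=> _; apply: bigcup_open => bd _; exact: ball_open.
have coverU : simplex_rows `<=` \bigcup_(w in simplex_rows) U w.
  move=> v Kv; have [w Kw gwv] := improve v Kv.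
  move: gwv; rewrite -subr_gt0 => /(lsc_f _ Kv) [d d0 near_v].
  exists w => //; exists (v, d) => /=; last exact: ballxx.
  split => // z Kz [_ vz]; have := near_v _ Kz.
  rewrite opprB addrC subrK; apply=> a.
  by have := vz ord0 (enum_rank a); rewrite /ball /= distrC.
have := compact_simplex_rows; rewrite compact_cover => /(_ _ _ _ openU coverU).
move=> [D DK Dcover].
have K0 : simplex_rows (row_of_fun p0) by rewrite /simplex_rows /= row_of_funK.
have [w0 w0D _] := Dcover _ K0.
case: (@arg_minP _ _ D [` w0D]%fset xpredT (fun w => g (val w)) isT).
move=> wm _ min_wm.
have Kwm : simplex_rows (val wm) by rewrite -in_setE; apply: DK; exact: valP.
have [wi wiD [bd [_ g_above] bd_wm]] := Dcover _ Kwm.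
by have := g_above _ Kwm bd_wm; rewrite ltNge (min_wm [` wiD]%fset).
Qed.

Lemma lsc_on_simplex_linear (L : A -> R) (k : R) (f : (A -> R) -> R) :
  lsc_on_simplex f -> lsc_on_simplex (fun p => \sum_a L a * p a + f p + k).
Proof.
move=> lsc_f p Sp e e0.
have e2_0 : 0 < e / 2 by rewrite divr_gt0.
have [d1 d1_0 near_p] := lsc_f p Sp _ e2_0.
pose M := \sum_a `|L a| + 1.
have M0 : 0 < M by rewrite ltr_pwDr // sumr_ge0.
exists (Num.min d1 (e / 2 / M)); first by rewrite lt_min d1_0 divr_gt0.
move=> q Sq near_q.
have {}near_q a : `|q a - p a| < d1 /\ `|q a - p a| < e / 2 / M.
  by apply/andP; rewrite -lt_min.
have linear_close : \sum_a L a * p a - \sum_a L a * q a <= e / 2.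
  rewrite -sumrB; apply: le_trans (_ : \sum_a `|L a| * (e / 2 / M) <= _).
    apply: ler_sum => a _; rewrite -mulrBr; apply: le_trans (ler_norm _) _.
    by rewrite normrM distrC ler_wpM2l // ltW // (near_q a).2.
  rewrite -mulr_suml (le_trans (ler_wpM2r _ (_ : \sum_a `|L a| <= M))) //.
  - by rewrite divr_ge0 // ltW.
  - by rewrite lerDl.
  - by rewrite mulrC divfK // gt_eqF.
have f_close := near_p q Sq (fun a => (near_q a).1).
lra.
Qed.

End SimplexMinimum.

Lemma rseries_ge0 (R : realType) (u : nat -> R) :
  (forall t, 0 <= u t) -> 0 <= rseries u.
Proof.
move=> u_ge0; rewrite /rseries.
have [cvg_u|dvg_u] := pselect (cvgn (fun n => \sum_(0 <= t < n) u t)).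
  by apply: limr_ge cvg_u _; apply: nearW => n; exact: sumr_ge0.
(* the limit of a divergent sequence is the default point 0 *)
rewrite /lim /lim_in; case: xgetP => //= l _ to_l.
by exfalso; apply: dvg_u; exact: cvgP to_l.
Qed.

Section Visitation.
Variables (R : realType) (S A : finType) (P : S -> A -> S -> R).
Variables (gamma : R) (rho : S -> R) (pi : S -> A -> R).
Hypotheses (kernel_P : is_kernel P) (policy_pi : is_policy pi).

Lemma state_prob_ge0 t q s : 0 <= state_prob P pi t q s.
Proof.
elim: t s => [|t IHt] s /=; first exact: ler0n.
apply: sumr_ge0 => s' _; rewrite mulr_ge0 // sumr_ge0 // => a _.
by rewrite mulr_ge0 // ?(policy_pi s').1 ?(kernel_P s' a).1.
Qed.

Lemma eta_vis_ge0 s : 0 <= gamma < 1 -> in_simplex rho ->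
  0 <= eta_vis gamma P pi rho s.
Proof.
move=> /andP[gamma_ge0 gamma_lt1] [rho_ge0 _].
have subr_gamma_ge0 : 0 <= 1 - gamma by rewrite subr_ge0 ltW.
rewrite /eta_vis mulr_ge0 ?invr_ge0 // sumr_ge0 // => q _.
rewrite mulr_ge0 // /kappa mulr_ge0 // rseries_ge0 // => t.
by rewrite mulr_ge0 ?exprn_ge0 ?state_prob_ge0.
Qed.

End Visitation.

Section Lagrangian.
Variables (R : realType) (S A : finType).
Variables (P : S -> A -> S -> R) (c : S -> A -> R) (h : S -> (A -> R) -> R).
Variables (gamma : R) (rho : S -> R) (pi pi' : S -> A -> R).

Local Notation V := (Vfun gamma P c h pi).
Local Notation Q := (Qfun gamma P c h pi).
Local Notation eta := (eta_vis gamma P pi' rho).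

Definition normalized (x : A -> S -> R) (s : S) : A -> R :=
  fun a => x a s / \sum_a' x a' s.

Lemma LagE x v : Lag gamma P c h pi' rho x v = \sum_s v s * rho s
  + \sum_s (\sum_a x a s * (c s a + gamma * \sum_s' P s a s' * v s' - v s)
            + eta s * hbar h x s).
Proof.
have inflow : \sum_s v s * \sum_s' \sum_a P s' a s * x a s'
    = \sum_s \sum_a x a s * \sum_s' P s a s' * v s'.
  under eq_bigr do rewrite big_distrr.
  rewrite exchange_big; apply: eq_bigr => s _ /=.
  under eq_bigr do rewrite big_distrr.
  rewrite exchange_big; apply: eq_bigr => a _ /=.
  by rewrite big_distrr; apply: eq_bigr => s' _ /=; ring.
have state_term s :
    \sum_a x a s * (c s a + gamma * \sum_s' P s a s' * v s' - v s)
    = \sum_a c s a * x a s - v s * \sum_a x a s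
      + gamma * \sum_a x a s * \sum_s' P s a s' * v s'.
  rewrite [v s * _]big_distrr [gamma * \sum_a _]big_distrr -sumrB -big_split.
  by apply: eq_bigr => a _ /=; ring.
rewrite /Lag /flowT.
have -> : \sum_s v s * (rho s - (\sum_a x a s
      - gamma * \sum_s' \sum_a P s' a s * x a s'))
    = \sum_s (v s * rho s - v s * \sum_a x a s)
      + gamma * \sum_s v s * \sum_s' \sum_a P s' a s * x a s'.
  by rewrite big_distrr -big_split; apply: eq_bigr => s _ /=; ring.
rewrite inflow big_distrr -!big_split; apply: eq_bigr => s _ /=.
rewrite state_term; ring.
Qed.

Lemma state_term_psi x s : (forall a, 0 <= x a s) -> \sum_a x a s = eta s ->
  \sum_a x a s * (c s a + gamma * \sum_s' P s a s' * V s' - V s)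
  + eta s * hbar h x s = eta s * psi gamma P c h pi s (normalized x s).
Proof.
move=> x_ge0 sum_x.
have [eta0|eta_neq0] := eqVneq (eta s) 0.
  have x0 a : x a s = 0.
    by apply: (@psumr_eq0P _ _ xpredT _ (fun b _ => x_ge0 b)); rewrite ?sum_x.
  by rewrite eta0 big1 ?mul0r ?add0r // => a _; rewrite x0 mul0r.
rewrite /psi /hbar -/(normalized x s).
set T := \sum_a _ * normalized x s a.
have eta_T : eta s * T
    = \sum_a x a s * (c s a + gamma * \sum_s' P s a s' * V s' - V s)
      + eta s * (V s + h s (pi s)).
  rewrite -{2}sum_x mulr_suml -big_split big_distrr /=.
  by apply: eq_bigr => a _; rewrite /normalized /Qfun sum_x; field.
by rewrite !mulrDr eta_T; ring.
Qed.

Lemma LagE_Xset x : Xset gamma P pi' rho x ->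
  Lag gamma P c h pi' rho x V = \sum_s V s * rho s
    + \sum_s eta s * psi gamma P c h pi s (normalized x s).
Proof.
move=> [x_ge0 sum_x]; rewrite LagE; congr (_ + _).
by apply: eq_bigr => s _; rewrite state_term_psi.
Qed.

Lemma normalized_in_simplex x s : (forall a, 0 <= x a s) ->
  0 < \sum_a x a s -> in_simplex (normalized x s).
Proof.
move=> x_ge0 sum_gt0; split => [a|]; first by rewrite divr_ge0 // ltW.
by rewrite -mulr_suml divff // gt_eqF.
Qed.

Lemma lsc_on_simplex_psi s :
  lsc_on_simplex (h s) -> lsc_on_simplex (psi gamma P c h pi s).
Proof.
have -> : psi gamma P c h pi s
    = fun p => \sum_a Q s a * p a + h s p + (- V s - h s (pi s)).
  by apply/funext => p; rewrite /psi; ring.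
exact: lsc_on_simplex_linear.
Qed.

Hypothesis eta_ge0 : forall s, 0 <= eta s.

Definition occupancy (p : S -> A -> R) : A -> S -> R :=
  fun a s => eta s * p s a.

Lemma occupancy_Xset p : is_policy p -> Xset gamma P pi' rho (occupancy p).
Proof.
move=> policy_p; split => [a s|s]; first by rewrite mulr_ge0 // (policy_p s).1.
by rewrite /occupancy /= -big_distrr /= (policy_p s).2; exact: mulr1.
Qed.

Lemma Lag_occupancy p : is_policy p ->
  Lag gamma P c h pi' rho (occupancy p) V
    = \sum_s V s * rho s + \sum_s eta s * psi gamma P c h pi s (p s).
Proof.
move=> policy_p; rewrite LagE_Xset; last exact: occupancy_Xset.
congr (_ + _).
apply: eq_bigr => s _; have [->|eta_neq0] := eqVneq (eta s) 0.
  by rewrite !mul0r.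
congr (_ * psi _ _ _ _ _ _ _); apply/funext => a.
rewrite /normalized /occupancy /= -big_distrr /= (policy_p s).2.
by rewrite mulr1 mulrC mulKf.
Qed.

Lemma Lag_ge_argmin_psi p x :
  (forall s q, in_simplex q ->
     psi gamma P c h pi s (p s) <= psi gamma P c h pi s q) ->
  Xset gamma P pi' rho x ->
  \sum_s V s * rho s + \sum_s eta s * psi gamma P c h pi s (p s)
    <= Lag gamma P c h pi' rho x V.
Proof.
move=> p_min [x_ge0 sum_x]; rewrite LagE_Xset // lerD2l.
apply: ler_sum => s _; have := eta_ge0 s.
rewrite le_eqVlt => /predU1P[<-|eta_gt0]; first by rewrite !mul0r.
by apply/ler_wpM2l/p_min/normalized_in_simplex; rewrite ?sum_x ?ltW.
Qed.

End Lagrangian.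

Theorem lemma2p6 (R : realType) (S A : finType)
  (P : S -> A -> S -> R) (c : S -> A -> R) (h : S -> (A -> R) -> R)
  (gamma : R) (rho : S -> R) (pi pi' : S -> A -> R) :
  is_kernel P ->
  0 <= gamma < 1 ->
  (forall s, closed_convex_on_simplex (h s)) ->
  in_simplex rho -> is_policy pi -> is_policy pi' ->
  exists m : S -> R,
    (forall s, is_max_of (@in_simplex R A)
       (fun p => - psi gamma P c h pi s p) (m s)) /\
    is_min_of (Xset gamma P pi' rho)
      (fun x => Lag gamma P c h pi' rho x (Vfun gamma P c h pi))
      (\sum_(s : S) Vfun gamma P c h pi s * rho s
       - \sum_(s : S) eta_vis gamma P pi' rho s * m s).
Proof.
move=> kernel_P gamma01 closed_h simplex_rho policy_pi policy_pi'.
have eta_ge0 s := eta_vis_ge0 kernel_P policy_pi' s gamma01 simplex_rho.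
have argmin_psi s : exists p, in_simplex p
    /\ forall q, in_simplex q -> psi gamma P c h pi s p <= psi gamma P c h pi s q.
  have lsc_psi := lsc_on_simplex_psi P c gamma pi (closed_h s).2.
  by have [p] := lsc_on_simplex_min (policy_pi s) lsc_psi; exists p.
have [pmin pmin_spec] := choice argmin_psi.
exists (fun s => - psi gamma P c h pi s (pmin s)); split.
  move=> s; split; first by exists (pmin s); [exact: (pmin_spec s).1|].
  by move=> q simplex_q; rewrite lerN2 (pmin_spec s).2.
have -> : \sum_s eta_vis gamma P pi' rho s * - psi gamma P c h pi s (pmin s)
    = - \sum_s eta_vis gamma P pi' rho s * psi gamma P c h pi s (pmin s).
  by rewrite -sumrN; apply: eq_bigr => s _; rewrite mulrN.
rewrite opprK.
have policy_pmin : is_policy pmin := fun s => (pmin_spec s).1.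
split.
  exists (occupancy P gamma rho pi' pmin); first exact: occupancy_Xset.
  exact: Lag_occupancy.
by move=> x; apply: Lag_ge_argmin_psi => // s; exact: (pmin_spec s).2.
Qed.
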